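(* Let $F_i=F$ for all $i\in[A]$, suppose $\sum_{k\ge1}1/F(k)=\infty$ and that $L(k):=F(k)/k$ is increasing. Then there is an almost surely finite random constant $c>0$ such that $\chi_i(n)\ge e^{-cL(n)}$ for all $n\ge1$ and all $i\in[A]$.
   Context: Fix $A\ge2$, $[A]=\{1,\dots,A\}$. The generalized Pólya urn with feedback $F:\mathbb{N}\to(0,\infty)$ is the Markov chain $X(n)\in\mathbb{N}^A$ with $X_i(0)\ge1$ and $\mathbb{P}(X(n+1)=X(n)+e^{(i)}\mid X(n))=F(X_i(n))/\sum_jF(X_j(n))$; $N=\sum_jX_j(0)$ and $\chi_i(n)=X_i(n)/(N+n)$. *)

From HB Require Import structures.
From mathcomp Require Import all_boot all_order all_algebra.
From mathcomp Require Import all_classical all_reals all_analysis.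
Set Implicit Arguments. Unset Strict Implicit. Unset Printing Implicit Defensive.
Import Order.TTheory GRing.Theory Num.Theory.
Local Open Scope classical_set_scope.
Local Open Scope ring_scope.

(* Urn configurations: X(n) in N^A, indexed by 'I_A = [A] (0-based). *)
Definition config (A : nat) := {ffun 'I_A -> nat}.

Definition add_ball (A : nat) (x : config A) (i : 'I_A) : config A :=
  [ffun j => (x j + (j == i))%N].

Definition urn_step_prob (R : realType) (A : nat) (F : nat -> R)
  (x : config A) (i : 'I_A) : R :=
  F (x i) / \sum_(j < A) F (x j).

Definition history_event (T : Type) (A : nat) (X : nat -> T -> config A)
  (h : nat -> config A) (n : nat) : set T :=
  [set w | forall k, (k <= n)%N -> X k w = h k].

(* X is (on the probability space P) a generalized Polya urn with feedback F
   and (deterministic) initial configuration x0: every X n is a discrete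
   random variable, X 0 = x0, and for every history h of length n+1 and every
   colour i, P(X(0..n) = h(0..n), X(n+1) = h n + e^(i))
            = F(h_n i)/sum_j F(h_n j) * P(X(0..n) = h(0..n)).
   (Since these probabilities sum to 1 over i, this determines the law of the
   Markov chain.) *)
Definition is_gen_polya_urn (d : measure_display) (T : measurableType d)
  (R : realType) (P : probability T R) (A : nat) (F : nat -> R)
  (x0 : config A) (X : nat -> T -> config A) : Prop :=
  [/\ (forall n x, measurable [set w | X n w = x]),
      (forall w, X 0%N w = x0) &
      (forall (h : nat -> config A) (n : nat) (i : 'I_A),
        P (history_event X h n `&` [set w | X n.+1 w = add_ball (h n) i])
        = ((urn_step_prob F (h n) i)%:E * P (history_event X h n))%E)].

Definition chi (R : realType) (A : nat) (x0 : config A) (xn : config A)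
  (n : nat) (i : 'I_A) : R :=
  (xn i)%:R / (\sum_(j < A) x0 j + n)%N%:R.

From HB Require Import structures.
From mathcomp Require Import all_boot all_order all_algebra.
From mathcomp Require Import all_classical all_reals all_analysis.
From mathcomp Require Import ring lra.
Set Implicit Arguments. Unset Strict Implicit. Unset Printing Implicit Defensive.
Import Order.TTheory GRing.Theory Num.Theory.
Local Open Scope classical_set_scope.
Local Open Scope ring_scope.

(* Write Phi(k) = sum_{l<k} 1/F(l) and, for a configuration x,
     Z(x) = sum_{i,j} (Phi(x_j) - Phi(x_i))^2 + (2A-2) kappa sum_b 1/x_b,
   with kappa = 2/F(1)^2.
   1. Z is a supermartingale along one urn step: the first-order terms of the
      quadratic part cancel under the transition law, and the second-order
      term 1/F(x_a)^2 is absorbed by the decrease of kappa/x_a, because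
      F(k) >= F(1) k.
   2. Summing over the finitely many draw sequences of length n, discrete
      optional stopping gives the maximal inequality
        lam * P(max_{k<=n} Z(X(k)) >= lam) <= Z(X(0)),
      hence sup_n Z(X(n)) < oo almost surely.
   3. Deterministically, Z(X(n)) < lam bounds every gap Phi(X_j(n)) - Phi(X_i(n))
      by 1 + lam; a count grows from k to m <= n only if
      m <= k exp(L(n) (Phi(m) - Phi(k))), and the largest colour holds at least
      n/A balls, so X_i(n) >= n / (A exp((1+lam) L(n))), which gives
      chi_i(n) >= exp(-c L(n)). *)

Lemma sum_sq_diff (R : comPzRingType) (n : nat) (u : 'I_n -> R) :
  \sum_(i < n) \sum_(j < n) (u j - u i) ^+ 2 =
  2 * n%:R * \sum_(b < n) u b ^+ 2 - 2 * (\sum_(b < n) u b) ^+ 2.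
Proof.
have row i : \sum_(j < n) (u j - u i) ^+ 2 =
    \sum_(j < n) u j ^+ 2 - 2 * (u i * \sum_(j < n) u j) + n%:R * u i ^+ 2.
  rewrite [u i * _]mulr_sumr mulr_sumr.
  have -> : n%:R * u i ^+ 2 = \sum_(j < n) u i ^+ 2.
    by rewrite sumr_const card_ord mulr_natl.
  by rewrite -sumrB -big_split /=; apply: eq_bigr => j _; ring.
rewrite (eq_bigr _ (fun i _ => row i)) big_split /= sumrB /=.
by rewrite sumr_const card_ord -!mulr_sumr -mulr_suml -mulr_natl; ring.
Qed.

Lemma sq_diff_le_sum (R : realDomainType) (n : nat) (u : 'I_n -> R) (i j : 'I_n) :
  (u j - u i) ^+ 2 <= \sum_(i' < n) \sum_(j' < n) (u j' - u i') ^+ 2.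
Proof.
rewrite (bigD1 i) //= (bigD1 j (P := xpredT)) //= -addrA lerDl.
apply: addr_ge0; first by apply: sumr_ge0 => b _; apply: sqr_ge0.
by apply: sumr_ge0 => a _; apply: sumr_ge0 => b _; apply: sqr_ge0.
Qed.

Lemma sum_le_card_max (A : nat) (y : 'I_A -> nat) (i : 'I_A) :
  exists j, (\sum_(b < A) y b <= A * y j)%N.
Proof.
have [j _ jmax] := @arg_maxnP _ i xpredT y isT.
exists j; rewrite -[X in (_ <= X * _)%N]card_ord -sum_nat_const.
by apply: leq_sum => b _; apply: jmax.
Qed.

Lemma le_expR_scaled (R : realType) (a b L : R) :
  0 <= a -> 0 < b -> b <= L -> a <= expR (a / b * L).
Proof.
move=> a_ge0 b_gt0 bL; apply: le_trans (expR_ge1Dx _).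
have : a * 1 <= a * (L / b) by apply: ler_wpM2l; rewrite // ler_pdivlMr ?mul1r.
by rewrite mulr1 mulrAC -mulrA; lra.
Qed.

Lemma eq0_le_div_succ (R : realType) (x : \bar R) (a : R) :
  (0 <= x)%E -> (forall m : nat, (x <= (a / m.+1%:R)%:E)%E) -> x = 0%E.
Proof.
case: x => [r| |] //; last by move=> _ /(_ 0%N).
rewrite lee_fin => r_ge0 r_le; congr (_%:E); apply/eqP; rewrite eq_le r_ge0 andbT.
rewrite leNgt; apply/negP => r_gt0.
have big_m := truncnS_gt (a / r).
have := r_le (Num.truncn (a / r)); rewrite lee_fin.
set m := (Num.truncn (a / r)).+1%:R in big_m *.
have m_gt0 : 0 < m by rewrite /m ltr0Sn.
rewrite ler_pdivlMr // => le_rm; move: big_m; rewrite ltr_pdivrMr // => lt_rm.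
by have := le_lt_trans le_rm lt_rm; rewrite mulrC ltxx.
Qed.

Definition all_present (A : nat) (c : config A) : Prop := forall b, (1 <= c b)%N.

Lemma add_ball_present (A : nat) (c : config A) (i : 'I_A) :
  all_present c -> all_present (add_ball c i).
Proof. by move=> hc b; rewrite ffunE; apply: leq_trans (hc b) (leq_addr _ _). Qed.

Lemma sum_add_ball (V : zmodType) (A : nat) (g : nat -> V) (c : config A) (a : 'I_A) :
  \sum_(b < A) g (add_ball c a b) = \sum_(b < A) g (c b) + (g (c a).+1 - g (c a)).
Proof.
rewrite (bigD1 a) //= [in RHS](bigD1 a) //= ffunE eqxx addn1.
rewrite (eq_bigr (fun b => g (c b))); last by move=> b /negbTE hb; rewrite ffunE hb addn0.
by rewrite addrAC [g (c a) + _]addrC subrK.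
Qed.

Lemma add_ball_inj (A : nat) (c : config A) (i j : 'I_A) :
  add_ball c i = add_ball c j -> i = j.
Proof.
move=> /(congr1 (fun f : config A => f i)); rewrite !ffunE eqxx => /eqP.
by rewrite eqn_add2l; case: (i =P j).
Qed.

Definition apply_draws (A : nat) (c : config A) (s : seq 'I_A) : config A :=
  foldl (@add_ball A) c s.

Lemma apply_draws_rcons (A : nat) (c : config A) (s : seq 'I_A) (i : 'I_A) :
  apply_draws c (rcons s i) = add_ball (apply_draws c s) i.
Proof. by rewrite /apply_draws foldl_rcons. Qed.

Lemma apply_draws_present (A : nat) (s : seq 'I_A) (c : config A) :
  all_present c -> all_present (apply_draws c s).
Proof. by elim: s c => [|i s IH] c hc //=; apply/IH/add_ball_present. Qed.

Lemma apply_draws_total (A : nat) (s : seq 'I_A) (c : config A) :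
  (\sum_(b < A) apply_draws c s b = \sum_(b < A) c b + size s)%N.
Proof.
elim: s c => [|i s IH] c /=; first by rewrite addn0.
rewrite IH (bigD1 i) //= [X in (_ = X + _)%N](bigD1 i) //= ffunE eqxx.
rewrite (eq_bigr (fun b => c b)); last by move=> b /negbTE hb; rewrite ffunE hb addn0.
by rewrite addn1 !addSn addnS.
Qed.

Lemma apply_draws_inj (A : nat) (s s' : seq 'I_A) (c : config A) :
  size s = size s' ->
  (forall k, (k <= size s)%N -> apply_draws c (take k s) = apply_draws c (take k s')) ->
  s = s'.
Proof.
elim: s s' c => [|i s IH] [|j s'] c //= [hs] same.
have ij : i = j by have := same 1%N isT; rewrite /= !take0; apply: add_ball_inj.
subst j; congr cons; apply: (IH s' (add_ball c i) hs) => k hk.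
exact: (same k.+1 hk).
Qed.

Fixpoint draw_seqs (I : finType) (n : nat) : seq (seq I) :=
  if n is n'.+1 then [seq i :: s | i <- index_enum I, s <- draw_seqs I n']
  else [:: [::]].

Lemma mem_draw_seqs (I : finType) (n : nat) (s : seq I) :
  (s \in draw_seqs I n) = (size s == n).
Proof.
apply/idP/eqP => [|<-].
  elim: n s => [|n IH] s /=; first by rewrite inE => /eqP ->.
  by case/allpairsP => -[i t] /= [_ /IH ht ->] /=; rewrite ht.
elim: s => [|i s IH] /=; first by rewrite inE.
exact: (allpairs_f (fun i s => i :: s) (mem_index_enum i) IH).
Qed.

Lemma draw_seqs_uniq (I : finType) (n : nat) : uniq (draw_seqs I n).
Proof.
elim: n => [|n IH] //=; apply: allpairs_uniq => //; first exact: index_enum_uniq.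
by move=> [i s] [j t] _ _ /= [-> ->].
Qed.

Section UrnPotential.
Variables (R : realType) (A : nat) (F : nat -> R).
Hypothesis A_gt0 : (0 < A)%N.
Hypothesis F_pos : forall k, (1 <= k)%N -> 0 < F k.
Hypothesis L_mono : forall m n, (1 <= m)%N -> (m <= n)%N -> F m / m%:R <= F n / n%:R.

(* Phi(k) = sum_{l<k} 1/F(l): the natural clock of a colour holding k balls. *)
Definition Phi (k : nat) : R := \sum_(l < k) (F l)^-1.

Definition kappa : R := 2 / F 1 ^+ 2.

Definition potential (c : config A) : R :=
  \sum_(i < A) \sum_(j < A) (Phi (c j) - Phi (c i)) ^+ 2
  + (2 * A%:R - 2) * kappa * \sum_(b < A) ((c b)%:R)^-1.

Lemma Phi_succ (k : nat) : Phi k.+1 = Phi k + (F k)^-1.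
Proof. by rewrite /Phi big_ord_recr. Qed.

Lemma Phi_mono (a b : nat) : (1 <= a)%N -> (a <= b)%N -> Phi a <= Phi b.
Proof.
move=> a_ge1; elim: b => [|b IH]; first by rewrite leqn0 => /eqP ->.
rewrite leq_eqVlt => /orP[/eqP ->//|ab].
rewrite Phi_succ; apply: le_trans (IH ab) _; rewrite lerDl invr_ge0.
exact/ltW/F_pos/(leq_trans a_ge1 ab).
Qed.

(* Monotonicity of L gives the linear lower bound F(k) >= F(1) k. *)
Lemma F_ge_linear (k : nat) : (1 <= k)%N -> F 1 * k%:R <= F k.
Proof.
by move=> k_ge1; have := L_mono (leqnn 1) k_ge1; rewrite divr1 ler_pdivlMr ?ltr0n.
Qed.

Lemma coef_ge0 : 0 <= 2 * A%:R - 2 :> R.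
Proof. have A_ge1 : 1 <= A%:R :> R by rewrite ler1n. lra. Qed.

Lemma kappa_ge0 : 0 <= kappa.
Proof. by apply: divr_ge0 => //; apply: sqr_ge0. Qed.

(* The second-order term of a step is absorbed by the decrease of kappa/k:
   1/F(k)^2 <= 1/(F(1) k)^2 <= 2/(F(1)^2 k (k+1)) = kappa (1/k - 1/(k+1)). *)
Lemma kappa_absorbs (k : nat) : (1 <= k)%N ->
  (F k)^-1 ^+ 2 + kappa * ((k.+1)%:R^-1 - (k%:R)^-1) <= 0.
Proof.
move=> k_ge1; have fg := F_ge_linear k_ge1; have g_gt0 : 0 < F 1 by apply: F_pos.
have x_ge1 : 1 <= k%:R :> R by rewrite ler1n.
set f := F k in fg *; set g := F 1 in fg g_gt0 *; set x := k%:R in fg x_ge1 *.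
have f_gt0 : 0 < f by apply: lt_le_trans fg; apply: mulr_gt0 => //; lra.
have -> : kappa * ((k.+1)%:R^-1 - x^-1) = - (g ^+ 2 * x * (x + 1) / 2)^-1.
  rewrite /kappa -/g -addn1 natrD -/x; field.
  by apply/and3P; split; apply/lt0r_neq0; lra.
rewrite subr_le0 exprVn lef_pV2 ?posrE; last 2 first.
- by apply: exprn_gt0.
- by apply: divr_gt0 => //; apply: mulr_gt0; [apply: mulr_gt0|]; rewrite ?exprn_gt0 //; lra.
have gx_ge0 : 0 <= g * x by apply: mulr_ge0; lra.
have gx_le : (g * x) * (g * x) <= f * f by nra.
have g2_ge0 : 0 <= g * g by nra.
rewrite !expr2; nra.
Qed.

Lemma potential_add_ball (c : config A) (a : 'I_A) :
  potential (add_ball c a) = potential c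
   + (4 * A%:R * Phi (c a) - 4 * \sum_(b < A) Phi (c b)) * (F (c a))^-1
   + (2 * A%:R - 2) * ((F (c a))^-1 ^+ 2
                       + kappa * (((c a).+1)%:R^-1 - ((c a)%:R)^-1)).
Proof.
rewrite /potential (sum_sq_diff (fun b => Phi (add_ball c a b))).
rewrite (sum_sq_diff (fun b => Phi (c b))).
rewrite (sum_add_ball (fun k => Phi k ^+ 2)) (sum_add_ball Phi).
by rewrite (sum_add_ball (fun k : nat => (k%:R)^-1 : R)) Phi_succ; ring.
Qed.

Lemma weight_total_gt0 (c : config A) : all_present c -> 0 < \sum_(b < A) F (c b).
Proof.
move=> hc; rewrite (bigD1 (Ordinal A_gt0)) //=.
apply: ltr_pwDl; first exact: F_pos.
by apply: sumr_ge0 => i _; apply/ltW/F_pos.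
Qed.

Lemma step_prob_ge0 (c : config A) (a : 'I_A) :
  all_present c -> 0 <= urn_step_prob F c a.
Proof.
by move=> hc; apply: divr_ge0; [apply/ltW/F_pos|apply/ltW/weight_total_gt0].
Qed.

Lemma step_prob_sum (c : config A) : all_present c ->
  \sum_(a < A) urn_step_prob F c a = 1.
Proof. by move=> hc; rewrite -mulr_suml divff // lt0r_neq0 ?weight_total_gt0. Qed.

Lemma potential_supermartingale (c : config A) : all_present c ->
  \sum_(a < A) urn_step_prob F c a * potential (add_ball c a) <= potential c.
Proof.
move=> hc; set S := \sum_(b < A) F (c b).
have S_gt0 : 0 < S by apply: weight_total_gt0.
have split_step a : urn_step_prob F c a * potential (add_ball c a) =
   urn_step_prob F c a * potential c
   + (4 * A%:R * Phi (c a) - 4 * \sum_(b < A) Phi (c b)) / S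
   + urn_step_prob F c a * ((2 * A%:R - 2) * ((F (c a))^-1 ^+ 2
                       + kappa * (((c a).+1)%:R^-1 - ((c a)%:R)^-1))).
  rewrite potential_add_ball /urn_step_prob -/S.
  have ca_ge1 : 1 <= (c a)%:R :> R by rewrite ler1n.
  field; rewrite !lt0r_neq0 ?F_pos //; lra.
(* the first-order terms average out to zero *)
have drift0 : \sum_(a < A) (4 * A%:R * Phi (c a) - 4 * \sum_(b < A) Phi (c b)) / S = 0.
  by rewrite -mulr_suml sumrB -mulr_sumr sumr_const card_ord -mulr_natl; ring.
rewrite (eq_bigr _ (fun a _ => split_step a)) !big_split /= -mulr_suml.
rewrite step_prob_sum // mul1r drift0 addr0 -[leRHS]addr0 lerD2l.
apply: sumr_le0 => a _; apply: mulr_ge0_le0; first exact: step_prob_ge0.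
by apply: mulr_ge0_le0; [exact: coef_ge0|exact: kappa_absorbs].
Qed.

Lemma potential_inv_part_ge0 (c : config A) :
  0 <= (2 * A%:R - 2) * kappa * \sum_(b < A) ((c b)%:R)^-1.
Proof.
apply: mulr_ge0; first by apply: mulr_ge0; [exact: coef_ge0|exact: kappa_ge0].
by apply: sumr_ge0 => b _; rewrite invr_ge0.
Qed.

Lemma potential_ge0 (c : config A) : 0 <= potential c.
Proof.
apply: addr_ge0; last exact: potential_inv_part_ge0.
by apply: sumr_ge0 => i _; apply: sumr_ge0 => j _; apply: sqr_ge0.
Qed.

Lemma Phi_gap_le (c : config A) (lam : R) (a b : 'I_A) :
  potential c < lam -> Phi (c b) - Phi (c a) <= 1 + lam.
Proof.
move=> Z_lt; have gap_sq := sq_diff_le_sum (fun b => Phi (c b)) a b.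
have := potential_inv_part_ge0 c.
move: Z_lt gap_sq; rewrite /potential; set D := Phi (c b) - Phi (c a).
nra.
Qed.

Fixpoint path_weight (c : config A) (s : seq 'I_A) : R :=
  if s is i :: s' then urn_step_prob F c i * path_weight (add_ball c i) s' else 1.

Lemma path_weight_ge0 (s : seq 'I_A) (c : config A) :
  all_present c -> 0 <= path_weight c s.
Proof.
elim: s c => [|i s IH] c hc /=; first exact: ler01.
by apply: mulr_ge0; [exact: step_prob_ge0|apply/IH/add_ball_present].
Qed.

Lemma path_weight_sum (n : nat) (c : config A) : all_present c ->
  \sum_(s <- draw_seqs 'I_A n) path_weight c s = 1.
Proof.
elim: n c => [|n IH] c hc /=; first by rewrite big_seq1.
rewrite big_allpairs_dep /= -(step_prob_sum hc); apply: eq_bigr => i _.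
by rewrite -mulr_sumr IH ?mulr1 //; apply: add_ball_present.
Qed.

Lemma path_weight_rcons (s : seq 'I_A) (c : config A) (i : 'I_A) :
  path_weight c (rcons s i) = path_weight c s * urn_step_prob F (apply_draws c s) i.
Proof.
by elim: s c => [|j s IH] c /=; [rewrite mulr1 mul1r|rewrite IH mulrA].
Qed.

Section Stopping.
Variable lam : R.

Fixpoint hits (c : config A) (s : seq 'I_A) : bool :=
  (lam <= potential c) || (if s is i :: s' then hits (add_ball c i) s' else false).

Fixpoint stopped_potential (c : config A) (s : seq 'I_A) : R :=
  if lam <= potential c then potential c
  else if s is i :: s' then stopped_potential (add_ball c i) s' else potential c.

Lemma hitsP (c : config A) (s : seq 'I_A) :
  reflect (exists2 k, (k <= size s)%N & lam <= potential (apply_draws c (take k s)))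
          (hits c s).
Proof.
elim: s c => [|i s IH] c /=.
  rewrite orbF; apply: (iffP idP) => [hc|[[|k] //= _ //]].
  by exists 0%N.
apply: (iffP orP) => [[hc|/IH [k hk hz]]|[[|k] hk hz]].
- by exists 0%N.
- by exists k.+1.
- by left.
- by right; apply/IH; exists k.
Qed.

Lemma stopped_potential_ge0 (s : seq 'I_A) (c : config A) : 0 <= stopped_potential c s.
Proof.
elim: s c => [|i s IH] c /=; first by case: ifP => _; apply: potential_ge0.
by case: ifP => _; [apply: potential_ge0|apply: IH].
Qed.

Lemma hits_stopped (s : seq 'I_A) (c : config A) : hits c s -> lam <= stopped_potential c s.
Proof.
elim: s c => [|i s IH] c /=; first by rewrite orbF => hit; rewrite hit.
by case: ifP => // _ /IH.
Qed.

(* Optional stopping: the stopped potential has mean at most Z(c). *)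
Lemma stopped_potential_mean (n : nat) (c : config A) : all_present c ->
  \sum_(s <- draw_seqs 'I_A n) path_weight c s * stopped_potential c s <= potential c.
Proof.
elim: n c => [|n IH] c hc /=; first by rewrite big_seq1 /= mul1r; case: ifP.
rewrite big_allpairs_dep /=.
have [Z_ge|Z_lt] := boolP (lam <= potential c).
  (* already stopped: the mean is exactly Z(c) *)
  rewrite le_eqVlt; apply/orP; left; apply/eqP.
  rewrite -[RHS]mul1r -(step_prob_sum hc) mulr_suml; apply: eq_bigr => i _.
  rewrite -[RHS]mul1r -(path_weight_sum n (add_ball_present i hc)) !mulr_suml.
  by apply: eq_bigr => s _ /=; rewrite mulrCA mulrA.
apply: le_trans (potential_supermartingale hc); apply: ler_sum => i _.
rewrite (eq_bigr (fun s => urn_step_prob F c i *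
  (path_weight (add_ball c i) s * stopped_potential (add_ball c i) s))); last first.
  by move=> s _ /=; rewrite mulrA.
rewrite -mulr_sumr; apply: ler_wpM2l; first exact: step_prob_ge0.
exact/IH/add_ball_present.
Qed.

Lemma maximal_inequality (n : nat) (c : config A) : all_present c ->
  lam * \sum_(s <- draw_seqs 'I_A n | hits c s) path_weight c s <= potential c.
Proof.
move=> hc; apply: le_trans (stopped_potential_mean n hc).
rewrite mulr_sumr big_mkcond /=; apply: ler_sum => s _.
case: ifP => hit; last by apply: mulr_ge0; [apply: path_weight_ge0|apply: stopped_potential_ge0].
by rewrite mulrC; apply: ler_wpM2l; [apply: path_weight_ge0|apply: hits_stopped].
Qed.

End Stopping.
End UrnPotential.

Section DeterministicBound.
Variables (R : realType) (A : nat) (F : nat -> R).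
Hypothesis A_gt0 : (0 < A)%N.
Hypothesis F_pos : forall k, (1 <= k)%N -> 0 < F k.
Hypothesis L_mono : forall m n, (1 <= m)%N -> (m <= n)%N -> F m / m%:R <= F n / n%:R.

(* Discrete Gronwall: measured on the clock Phi, a count grows at most
   exponentially with rate L(n), as long as it stays below n. *)
Lemma count_growth (k m n : nat) : (1 <= k)%N -> (k <= m)%N -> (m <= n)%N ->
  m%:R <= k%:R * expR (F n / n%:R * (Phi F m - Phi F k)).
Proof.
move=> k_ge1; elim: m => [|m IH]; first by rewrite leqn0 => /eqP k0; rewrite k0 in k_ge1.
rewrite leq_eqVlt => /orP[/eqP <- _|km mn]; first by rewrite subrr mulr0 expR0 mulr1.
have m_ge1 : (1 <= m)%N := leq_trans k_ge1 km.
have Fm_gt0 : 0 < F m := F_pos m_ge1.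
set L := F n / n%:R.
have Fm_le : F m <= m%:R * L.
  by rewrite mulrC -ler_pdivrMr ?ltr0n //; apply: L_mono => //; apply: ltnW.
(* one more ball costs a factor 1 + 1/m <= exp(L / F(m)) *)
have step : m%:R + 1 <= m%:R * expR (L / F m).
  have rate : 1 <= m%:R * (L / F m) by rewrite mulrA ler_pdivlMr // mul1r.
  apply: le_trans (_ : m%:R * (1 + L / F m) <= _); first by rewrite mulrDr mulr1 lerD2l.
  by apply: ler_wpM2l; [rewrite ler0n|exact: expR_ge1Dx].
rewrite Phi_succ -addn1 natrD addrAC mulrDr expRD mulrA.
apply: le_trans step _; apply: ler_wpM2r; first exact: expR_ge0.
by apply: IH => //; apply: ltnW.
Qed.

Lemma count_lower_bound (lam : R) (y : config A) (N n : nat) (i : 'I_A) :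
  all_present y -> (\sum_(b < A) y b)%N = (N + n)%N -> potential F y < lam ->
  (1 <= n)%N -> n%:R <= A%:R * (y i)%:R * expR (F n / n%:R * (1 + lam)).
Proof.
move=> hy y_total Z_lt n_ge1.
have lam_ge0 : 0 <= lam by apply: le_trans (ltW Z_lt); apply: potential_ge0.
have L_ge0 : 0 <= F n / n%:R by apply: divr_ge0; rewrite ?ler0n // ltW ?F_pos.
have [j big_j] := sum_le_card_max y i.
rewrite y_total in big_j.
(* the largest colour, capped at n, still holds at least n/A balls *)
set m := minn (y j) n.
have n_le_Am : (n <= A * m)%N.
  rewrite /m; case: (leqP (y j) n) => _; first by apply: leq_trans big_j; apply: leq_addl.
  by rewrite leq_pmull.
have m_le : m%:R <= (y i)%:R * expR (F n / n%:R * (1 + lam)).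
  have [m_le_yi|yi_lt_m] := leqP m (y i).
    rewrite -[leLHS]mulr1 ler_pM ?ler0n ?ler_nat //.
    by apply: le_trans (expR_ge1Dx _); rewrite lerDl; apply: mulr_ge0 => //; lra.
  apply: le_trans (count_growth (hy i) (ltnW yi_lt_m) (geq_minr _ _)) _.
  rewrite ler_wpM2l ?ler0n // ler_expR ler_wpM2l //.
  apply: le_trans (Phi_gap_le A_gt0 i j Z_lt); rewrite lerD2r.
  by apply: Phi_mono => //; [apply: leq_trans (hy i) (ltnW yi_lt_m)|apply: geq_minl].
apply: le_trans (_ : A%:R * m%:R <= _); first by rewrite -natrM ler_nat.
by rewrite -mulrA ler_wpM2l ?ler0n.
Qed.

Lemma proportion_lower_bound (N : nat) (lam : R) (Y : nat -> config A) :
  (forall n, all_present (Y n)) ->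
  (forall n, (\sum_(b < A) Y n b)%N = (N + n)%N) ->
  (forall n, potential F (Y n) < lam) ->
  exists c : R, 0 < c /\ forall (n : nat) (i : 'I_A), (1 <= n)%N ->
    expR (- (c * (F n / n%:R))) <= (Y n i)%:R / (N + n)%:R.
Proof.
move=> Y_present Y_total Y_bounded.
have lam_ge0 : 0 <= lam by apply: le_trans (ltW (Y_bounded 0%N)); apply: potential_ge0.
have F1_gt0 : 0 < F 1 by apply: F_pos.
set a := (N.+1 * A)%:R : R.
exists (1 + lam + a / F 1); split.
  by apply: ltr_wpDr; [apply: divr_ge0; rewrite ?ler0n ?ltW|lra].
move=> n i n_ge1; set L := F n / n%:R.
have L_ge : F 1 <= L by have := L_mono (leqnn 1) n_ge1; rewrite divr1.
have hk := count_lower_bound i (Y_present n) (Y_total n) (Y_bounded n) n_ge1.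
rewrite -/L in hk.
have a_le : a <= expR (a / F 1 * L) by apply: le_expR_scaled; rewrite ?ler0n.
have Nn_le : (N + n)%:R <= N.+1%:R * n%:R :> R.
  by rewrite -natrM ler_nat mulSn addnC leq_add2l leq_pmulr.
have k_gt0 : 0 < (Y n i)%:R :> R by rewrite ltr0n; apply: Y_present.
have Nn_gt0 : 0 < (N + n)%:R :> R by rewrite ltr0n addn_gt0 n_ge1 orbT.
(* N + n <= (N+1) n <= a k exp((1+lam) L) <= exp(a L / F(1)) k exp((1+lam) L) *)
rewrite expRN -[leRHS]invrK invf_div lef_pV2 ?posrE ?expR_gt0 ?divr_gt0 //.
rewrite ler_pdivrMr // mulrDl expRD.
have -> : expR ((1 + lam) * L) * expR (a / F 1 * L) * (Y n i)%:R
    = expR (a / F 1 * L) * ((Y n i)%:R * expR (L * (1 + lam))) by rewrite (mulrC L); ring.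
apply: le_trans Nn_le _; apply: le_trans (_ : a * ((Y n i)%:R * expR (L * (1 + lam))) <= _).
  by rewrite /a natrM -mulrA ler_wpM2l ?ler0n // mulrA.
by rewrite ler_wpM2r ?mulr_ge0 ?ler0n ?expR_ge0.
Qed.

End DeterministicBound.

Section UrnProbability.
Variables (d : measure_display) (T : measurableType d) (R : realType)
  (P : probability T R) (A : nat) (F : nat -> R) (x0 : config A)
  (X : nat -> T -> config A).
Hypothesis A_gt0 : (0 < A)%N.
Hypothesis F_pos : forall k, (1 <= k)%N -> 0 < F k.
Hypothesis L_mono : forall m n, (1 <= m)%N -> (m <= n)%N -> F m / m%:R <= F n / n%:R.
Hypothesis x0_present : all_present x0.
Hypothesis X_meas : forall n x, measurable [set w | X n w = x].
Hypothesis X_init : forall w, X 0%N w = x0.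
Hypothesis X_step : forall (h : nat -> config A) (n : nat) (i : 'I_A),
  P (history_event X h n `&` [set w | X n.+1 w = add_ball (h n) i])
  = ((urn_step_prob F (h n) i)%:E * P (history_event X h n))%E.

Lemma history_event_meas (h : nat -> config A) (n : nat) :
  measurable (history_event X h n).
Proof.
elim: n => [|n IH].
  rewrite (_ : history_event X h 0 = [set w | X 0%N w = h 0%N]) //.
  apply/seteqP; split => w /=; first by apply.
  by move=> hw k; rewrite leqn0 => /eqP ->.
rewrite (_ : history_event X h n.+1 =
             history_event X h n `&` [set w | X n.+1 w = h n.+1]).
  exact: measurableI.
apply/seteqP; split => w /=.
  by move=> hw; split; [move=> k hk; apply/hw/leqW|apply: hw].
by move=> [hw hn] k; rewrite leq_eqVlt => /orP[/eqP ->|] //; apply: hw.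
Qed.

Definition path_event (s : seq 'I_A) : set T :=
  history_event X (fun k => apply_draws x0 (take k s)) (size s).

Lemma path_event_prob (s : seq 'I_A) : P (path_event s) = (path_weight F x0 s)%:E.
Proof.
elim/last_ind: s => [|s i IH].
  rewrite (_ : path_event [::] = setT) ?probability_setT //.
  by apply/seteqP; split => w //= _ k; rewrite leqn0 => /eqP ->; rewrite X_init.
set h := fun k => apply_draws x0 (take k (rcons s i)).
have h_prefix k : (k <= size s)%N -> h k = apply_draws x0 (take k s).
  by move=> hk; rewrite /h -cats1 takel_cat.
have h_last : h (size s).+1 = add_ball (h (size s)) i.
  by rewrite [in RHS]h_prefix // take_size /h take_oversize ?size_rcons // apply_draws_rcons.
have prefix_event : history_event X h (size s) = path_event s.
  by apply/seteqP; split => w /= hw k hk; have := hw k hk; rewrite h_prefix.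
have -> : path_event (rcons s i) =
    history_event X h (size s) `&` [set w | X (size s).+1 w = add_ball (h (size s)) i].
  rewrite /path_event size_rcons -/h -h_last; apply/seteqP; split => w /=.
    by move=> hw; split; [move=> k hk; apply/hw/leqW|apply: hw].
  by move=> [hw hn] k; rewrite leq_eqVlt => /orP[/eqP ->|] //; apply: hw.
rewrite X_step prefix_event IH -EFinM path_weight_rcons h_prefix // take_size.
by rewrite mulrC.
Qed.

Lemma path_event_inj (s s' : seq 'I_A) (w : T) :
  size s = size s' -> path_event s w -> path_event s' w -> s = s'.
Proof.
move=> same_size hs hs'; apply: (apply_draws_inj (c := x0) same_size) => k hk.
by rewrite -hs // hs' // -same_size.
Qed.

Definition paths_event (Q : seq (seq 'I_A)) : set T :=
  [set w | exists2 s, s \in Q & path_event s w].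

Lemma paths_event_nil : paths_event [::] = set0.
Proof. by apply/seteqP; split => w //= [s]. Qed.

Lemma paths_event_cons (q : seq 'I_A) (Q : seq (seq 'I_A)) :
  paths_event (q :: Q) = path_event q `|` paths_event Q.
Proof.
apply/seteqP; split => w /=.
  by move=> [s]; rewrite inE => /orP[/eqP ->|sQ] hw; [left|right; exists s].
move=> [hw|[s sQ hw]]; first by exists q; rewrite ?mem_head.
by exists s; rewrite // inE sQ orbT.
Qed.

Lemma paths_event_meas (Q : seq (seq 'I_A)) : measurable (paths_event Q).
Proof.
elim: Q => [|q Q IH]; first by rewrite paths_event_nil.
by rewrite paths_event_cons; apply: measurableU IH; apply: history_event_meas.
Qed.

Lemma paths_event_prob (n : nat) (Q : seq (seq 'I_A)) :
  uniq Q -> (forall s, s \in Q -> size s = n) ->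
  P (paths_event Q) = (\sum_(s <- Q) path_weight F x0 s)%:E.
Proof.
elim: Q => [|q Q IH] /=; first by rewrite paths_event_nil measure0 big_nil.
move=> /andP[qQ Q_uniq] Q_size; rewrite paths_event_cons measureU.
- rewrite [X in (X + _)%E](_ : _ = (path_weight F x0 q)%:E); last exact: path_event_prob.
  rewrite [X in (_ + X)%E](_ : _ = (\sum_(s <- Q) path_weight F x0 s)%:E).
    by rewrite big_cons EFinD.
  by apply: IH => // s sQ; apply: Q_size; rewrite inE sQ orbT.
- exact: history_event_meas.
- exact: paths_event_meas.
apply/seteqP; split => w //= [hq [s sQ hs]]; move: qQ.
have -> : q = s by apply: (path_event_inj _ hq hs); rewrite !Q_size ?inE ?eqxx ?sQ ?orbT.
by rewrite sQ.
Qed.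

Definition all_paths (n : nat) : set T := paths_event (draw_seqs 'I_A n).

Lemma all_paths_prob (n : nat) : P (all_paths n) = 1%E.
Proof.
rewrite /all_paths (paths_event_prob (n := n)) ?draw_seqs_uniq ?path_weight_sum //.
by move=> s; rewrite mem_draw_seqs => /eqP.
Qed.

Lemma all_paths_prefix (n : nat) : all_paths n.+1 `<=` all_paths n.
Proof.
move=> w [s]; rewrite mem_draw_seqs => /eqP s_size hs.
exists (take n s); first by rewrite mem_draw_seqs size_takel // s_size.
rewrite /path_event size_takel ?s_size // => k hk.
by rewrite take_takel // hs // s_size; apply: leqW.
Qed.

(* The potential reaches lam within n steps, or the trajectory leaves the
   (almost sure) event all_paths n. *)
Definition exceed_event (lam : R) (n : nat) : set T :=
  paths_event [seq s <- draw_seqs 'I_A n | hits F lam x0 s] `|` ~` all_paths n.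

Lemma exceed_event_meas (lam : R) (n : nat) : measurable (exceed_event lam n).
Proof. by apply: measurableU; [|apply: measurableC]; apply: paths_event_meas. Qed.

Lemma exceed_event_prob (lam : R) (n : nat) : 0 < lam ->
  (P (exceed_event lam n) <= (potential F x0 / lam)%:E)%E.
Proof.
move=> lam_gt0.
have hit : (P (paths_event [seq s <- draw_seqs 'I_A n | hits F lam x0 s])
            <= (potential F x0 / lam)%:E)%E.
  rewrite (paths_event_prob (n := n)) ?filter_uniq ?draw_seqs_uniq //.
    rewrite lee_fin big_filter ler_pdivlMr // mulrC.
    exact: maximal_inequality.
  by move=> s; rewrite mem_filter mem_draw_seqs => /andP[_ /eqP].
rewrite /exceed_event measureU0.
- exact: hit.
- exact: paths_event_meas.
- exact/measurableC/paths_event_meas.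
transitivity (1 - P (all_paths n))%E; first exact/probability_setC/paths_event_meas.
by rewrite all_paths_prob subee.
Qed.

Lemma exceed_event_incr (lam : R) (n : nat) : exceed_event lam n `<=` exceed_event lam n.+1.
Proof.
move=> w [[s]|not_path]; last by right => /all_paths_prefix.
rewrite mem_filter mem_draw_seqs => /andP[hit /eqP s_size] hs.
have [[s' s'_all hs']|] := pselect (all_paths n.+1 w); last by right.
have /eqP s'_size : size s' == n.+1 by rewrite -mem_draw_seqs.
left; exists s' => //; rewrite mem_filter s'_all andbT.
case/hitsP: hit => k hk hz; apply/hitsP; exists k; first by rewrite s'_size -s_size leqW.
by rewrite -hs' ?s'_size -?s_size ?leqW // hs.
Qed.

(* By continuity from below, the potential ever reaches lam with
   probability at most Z(x0)/lam. *)
Lemma exceed_ever_prob (lam : R) : 0 < lam ->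
  (P (\bigcup_n exceed_event lam n) <= (potential F x0 / lam)%:E)%E.
Proof.
move=> lam_gt0.
have meas n : measurable (exceed_event lam n) by apply: exceed_event_meas.
have incr : {homo exceed_event lam : n m / (n <= m)%N >-> (n <= m)%O}.
  move=> n m; elim: m => [|m IH]; first by rewrite leqn0 => /eqP ->.
  rewrite leq_eqVlt => /orP[/eqP ->//|nm]; rewrite subsetEset.
  by apply: (subset_trans _ (@exceed_event_incr lam m)); rewrite -subsetEset; apply: IH.
have cvg := nondecreasing_cvg_mu (mu := P) meas (bigcupT_measurable _ meas) incr.
rewrite -(cvg_lim _ cvg) //; apply: lime_le; first exact: cvgP cvg.
by apply: nearW => n; apply: exceed_event_prob.
Qed.

Definition unbounded_event : set T := \bigcap_m \bigcup_n exceed_event m.+1%:R n.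

Lemma unbounded_event_meas : measurable unbounded_event.
Proof.
by apply: bigcapT_measurable => m; apply: bigcupT_measurable => n; apply: exceed_event_meas.
Qed.

(* Being below Z(x0)/(m+1) for every m, the unbounded event is null. *)
Lemma unbounded_event_null : P unbounded_event = 0%E.
Proof.
apply: (eq0_le_div_succ (a := potential F x0)) => [|m]; first exact: measure_ge0.
apply: le_trans (exceed_ever_prob (ltr0Sn _ m)).
apply: le_measure; rewrite ?inE; first exact: unbounded_event_meas.
  by apply: bigcupT_measurable => n; apply: exceed_event_meas.
by move=> w; apply.
Qed.

Lemma potential_bounded_ae :
  {ae P, forall w, exists lam : R, forall n, [/\ all_present (X n w),
     (\sum_(b < A) X n w b)%N = (\sum_(b < A) x0 b + n)%N
     & potential F (X n w) < lam]}.
Proof.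
exists unbounded_event; split; [exact: unbounded_event_meas|exact: unbounded_event_null|].
move=> w /= not_bounded; apply: contrapT => bounded; apply: not_bounded.
have [m never] : exists m : nat, ~ (\bigcup_n exceed_event m.+1%:R n) w.
  apply: contrapT => always; apply: bounded => m _; apply: contrapT => hm.
  by apply: always; exists m.
exists m.+1%:R => n.
have [s s_all hs] : all_paths n w.
  by apply: contrapT => not_path; apply: never; exists n => //; right.
have /eqP s_size : size s == n by rewrite -mem_draw_seqs.
have X_n : X n w = apply_draws x0 s by rewrite (hs n) -s_size ?take_size.
rewrite X_n apply_draws_total s_size; split => //; first exact: apply_draws_present.
rewrite ltNge; apply/negP => hz; apply: never; exists n => //; left.
exists s => //; rewrite mem_filter s_all andbT.
by apply/hitsP; exists (size s); rewrite ?take_size.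
Qed.

End UrnProbability.

Theorem mainTheorem18 (d : measure_display) (T : measurableType d)
  (R : realType) (P : probability T R) (A : nat) (F : nat -> R)
  (x0 : config A) (X : nat -> T -> config A) :
  (2 <= A)%N ->
  (forall i, (1 <= x0 i)%N) ->
  (forall k, (1 <= k)%N -> 0 < F k) ->
  (* sum_{k >= 1} 1/F(k) = infinity *)
  ([series (F k.+1)^-1]_k @ \oo --> +oo) ->
  (* L(k) = F(k)/k is (weakly) increasing on k >= 1 *)
  (forall m n, (1 <= m)%N -> (m <= n)%N -> F m / m%:R <= F n / n%:R) ->
  is_gen_polya_urn P F x0 X ->
  {ae P, forall w, exists c : R, 0 < c /\
     forall (n : nat) (i : 'I_A), (1 <= n)%N ->
       expR (- (c * (F n / n%:R))) <= @chi R A x0 (X n w) n i}.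
Proof.
move=> A_ge2 x0_present F_pos _ L_mono [X_meas X_init X_step].
have A_gt0 : (0 < A)%N := ltnW A_ge2.
apply: filterS (potential_bounded_ae A_gt0 F_pos L_mono x0_present X_meas X_init X_step).
move=> w [lam bounded].
apply: (proportion_lower_bound A_gt0 F_pos L_mono (lam := lam)) => n;
  by case: (bounded n).
Qed.
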